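(* Let $n\in\mathbb{N}$. For any $m\in\mathbb{N}$ and $0<p\le1$ (and score function $f$ single-peaked at $p$) there exists $\vec t\in\mathbb{R}^m$ (with entries in $[0,1]$) such that $\|\vec t\|_1\le n$ and the ranking game with thresholds $G_{\vec t}=\langle n,m,p,\vec t\rangle$ has a pure equilibrium.
   Context: Setting: $n$ players, queries $q_1,\dots,q_m$, a peak value $p\in(0,1]$ and a score function $f:[0,1]\to[0,1]$ single-peaked at $p$ ($p$ is the unique point such that $f$ is non-decreasing on $[0,p]$ and non-increasing on $[p,1]$). Each player $i$ chooses $d_i\in D=\{d\in[0,1]^m:\sum_j d^j\le1\}$, with score $f(d_i^j)$ for $q_j$. In $G_{\vec t}$, player $i$'s document is eligible for $q_j$ iff $d_i^j\ge\vec t_j$; among eligible documents those of highest score are the winners of $q_j$; if $q_j$ has $h_j$ winners each receives $1/h_j$; a query with no eligible document is won by nobody. Utility is the sum of shares. $\|\vec t\|_1=\sum_j|\vec t_j|$. A pure equilibrium is a pure Nash equilibrium (no player can strictly increase her utility by a unilateral change of document) in which every query has at least one winner. *)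

From mathcomp Require Import all_boot all_order all_algebra.
From mathcomp Require Import reals.
Set Implicit Arguments. Unset Strict Implicit. Unset Printing Implicit Defensive.
Import Order.TTheory GRing.Theory Num.Theory.
Local Open Scope ring_scope.

Section RankingGame.
Variable R : realType.

Definition peaked_at (f : R -> R) (q : R) : Prop :=
  (forall x y, 0 <= x -> x <= y -> y <= q -> f x <= f y) /\
  (forall x y, q <= x -> x <= y -> y <= 1 -> f y <= f x).

Definition single_peaked (f : R -> R) (p : R) : Prop :=
  (forall x, 0 <= x <= 1 -> 0 <= f x <= 1) /\
  0 <= p <= 1 /\ peaked_at f p /\
  (forall q, 0 <= q <= 1 -> peaked_at f q -> q = p).

Variables (n m : nat).

(* a document: one coordinate per query *)
Definition doc := 'I_m -> R.
Definition profile := 'I_n -> doc.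

Definition in_D (d : doc) : Prop :=
  (forall j, 0 <= d j <= 1) /\ \sum_(j < m) d j <= 1.

Variables (f : R -> R) (t : 'I_m -> R).

Definition eligible (P : profile) (i : 'I_n) (j : 'I_m) : bool := t j <= P i j.

Definition winner (P : profile) (i : 'I_n) (j : 'I_m) : bool :=
  eligible P i j && [forall k, eligible P k j ==> (f (P k j) <= f (P i j))].

Definition nb_winners (P : profile) (j : 'I_m) : nat :=
  #|[set i | winner P i j]|.

Definition utility (P : profile) (i : 'I_n) : R :=
  \sum_(j < m) (if winner P i j then (nb_winners P j)%:R^-1 else 0).

Definition deviate (P : profile) (i : 'I_n) (d : doc) : profile :=
  fun k => if k == i then d else P k.

Definition pure_equilibrium (P : profile) : Prop :=
  (forall i, in_D (P i)) /\
  (forall i d, in_D d -> utility (deviate P i d) i <= utility P i) /\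
  (forall j, (0 < nb_winners P j)%N).

End RankingGame.

(* Split the queries among the players as
   evenly as possible (by residues) and let every player put exactly the
   threshold on each of her own queries and nothing elsewhere: all other
   players are then ineligible there, so each query is shared by its owners.
   When m <= n all thresholds are 1, so a deviator is eligible for at most one
   query, where she can at best join its owners.  When n <= m the threshold of a
   query is the inverse of its owner's load (m/n or m/n + 1 queries), so the
   thresholds sum to n and each player earns her load.  A deviator reaching the
   threshold on k queries has k <= m/n + 1, and k = m/n + 1 forces her to tie
   exactly on queries owned by players of load m/n + 1, which earns at most
   k/2 <= m/n. *)

From mathcomp Require Import all_boot all_order all_algebra.
From mathcomp Require Import reals.
From mathcomp Require Import zify lra.
Set Implicit Arguments. Unset Strict Implicit. Unset Printing Implicit Defensive.
Import Order.TTheory GRing.Theory Num.Theory.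

Section ModOrd.
Variables (N M : nat) (M_gt0 : (0 < M)%N).

Definition mod_ord (x : 'I_N) : 'I_M := Ordinal (ltn_pmod x M_gt0).

Lemma card_mod_ord_fibre (a : 'I_M) :
  #|[set x | mod_ord x == a]| = (N %/ M + (a < N %% M))%N.
Proof.
rewrite -sum1_card (eq_bigl (fun x : 'I_N => x %% M == a)) => [|x]; last by rewrite inE.
rewrite big_mkcond /= -(big_mkord xpredT (fun x => if x %% M == a then 1 else 0)).
elim: N => [|k IHk]; first by rewrite big_geq // div0n mod0n.
rewrite big_nat_recr //= IHk divnS // modnS.
have aM := ltn_ord a.
case: (boolP (M %| k.+1)) => [dvdM|_] /=; last first.
  by case: eqP => ?; case: ltngtP => ?; case: ltngtP => ? /=; lia.
have -> : k %% M = M.-1.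
  case: (eqVneq M 1) => [->|M_neq1]; first by rewrite modn1.
  by rewrite -[k]/(k.+1.-1) modn_pred // dvdM.
by case: eqP => ?; case: ltngtP => ? /=; lia.
Qed.

End ModOrd.

Local Open Scope ring_scope.

Section Mass.
Variables (R : numDomainType) (I : finType) (d : I -> R) (E : {set I}) (c : R).
Hypotheses (d_ge0 : forall j, 0 <= d j) (c_le_d : forall j, j \in E -> c <= d j).

Lemma sumr_in_le_sum : \sum_(j in E) d j <= \sum_j d j.
Proof. by rewrite [leRHS](bigID (mem E)) /= lerDl sumr_ge0. Qed.

Lemma card_mulr_le_sum : #|E|%:R * c <= \sum_j d j.
Proof.
by rewrite mulr_natl -sumr_const (le_trans (ler_sum _ c_le_d)) ?sumr_in_le_sum.
Qed.

Lemma sum_le_card_mulr_eq :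
  \sum_j d j <= #|E|%:R * c -> forall j, j \in E -> d j = c.
Proof.
move=> sum_le j jE; apply/eqP; rewrite -subr_eq0; apply/eqP.
move: j jE; apply: psumr_eq0P => [j /c_le_d|]; first by rewrite subr_ge0.
apply/eqP; rewrite eq_le sumr_ge0 ?andbT => [|j /c_le_d]; last by rewrite subr_ge0.
by rewrite sumrB sumr_const -mulr_natl subr_le0 (le_trans (sumr_in_le_sum) sum_le).
Qed.

End Mass.

Section Game.
Variables (R : realType) (n m : nat) (f : R -> R) (t : 'I_m -> R).
Implicit Types (P : profile R n m) (i k : 'I_n) (j : 'I_m).

Local Notation share P j := ((nb_winners f t P j)%:R^-1 : R).

Lemma winner_eligible P i j : winner f t P i j -> t j <= P i j.
Proof. by case/andP. Qed.

Lemma winner_tie P i k j : winner f t P i j -> P k j = P i j -> winner f t P k j.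
Proof. by rewrite /winner /eligible => + ->. Qed.

Lemma share_le_inv_card P j (S : {set 'I_n}) :
  (0 < #|S|)%N -> {in S, forall k, winner f t P k j} -> share P j <= #|S|%:R^-1.
Proof.
move=> S_gt0 S_win; have S_le : (#|S| <= nb_winners f t P j)%N.
  by apply/subset_leq_card/subsetP => k kS; rewrite inE S_win.
by rewrite lef_pV2 ?ler_nat // posrE ltr0n // (leq_trans S_gt0).
Qed.

Lemma share_le1 P i j : winner f t P i j -> share P j <= 1.
Proof.
move=> win; have := @share_le_inv_card P j [set i]; rewrite cards1 invr1.
by apply=> // k; rewrite inE => /eqP ->.
Qed.

Lemma utility_le_sum_eligible P i (b : 'I_m -> R) :
  (forall j, 0 <= b j) -> (forall j, winner f t P i j -> share P j <= b j) ->
  utility f t P i <= \sum_(j in [set j | t j <= P i j]) b j.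
Proof.
move=> b_ge0 share_le; rewrite big_mkcond /utility ler_sum // => j _.
case: ifP => [win|_]; last by case: ifP.
by rewrite inE (winner_eligible win) share_le.
Qed.

Lemma deviate_self P i d : deviate P i d i = d.
Proof. by rewrite /deviate eqxx. Qed.

Lemma deviate_other P i d k : k != i -> deviate P i d k = P k.
Proof. by rewrite /deviate => /negbTE ->. Qed.

Section OwnerProfile.
Variable own : 'I_n -> 'I_m -> bool.
Hypothesis t_gt0 : forall j, 0 < t j.

Definition owner_profile : profile R n m := fun i j => if own i j then t j else 0.

Lemma winner_owner_profile i j : winner f t owner_profile i j = own i j.
Proof.
rewrite /winner /eligible /owner_profile.
have not_elig k : ~~ own k j -> (t j <= 0) = false by rewrite leNgt t_gt0.
case: (boolP (own i j)) => [_|/not_elig -> //]; rewrite lexx /=.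
by apply/forallP => k; case: (boolP (own k j)) => [_|/not_elig ->]; rewrite ?lexx.
Qed.

Lemma nb_winners_owner_profile j :
  nb_winners f t owner_profile j = #|[set i | own i j]|.
Proof. by apply: eq_card => i; rewrite !inE winner_owner_profile. Qed.

Lemma utility_owner_profile i :
  utility f t owner_profile i = \sum_(j | own i j) #|[set k | own k j]|%:R^-1.
Proof.
rewrite /utility [RHS]big_mkcond; apply: eq_bigr => j _.
by rewrite winner_owner_profile nb_winners_owner_profile.
Qed.

Lemma owner_profile_in_D i :
  (forall j, t j <= 1) -> \sum_(j | own i j) t j <= 1 -> in_D (owner_profile i).
Proof.
move=> t_le1 sum_le1; split=> [j|]; last by rewrite /owner_profile -big_mkcond.
by rewrite /owner_profile; case: ifP; rewrite ?lexx ?ler01 ?t_le1 ?ltW.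
Qed.

End OwnerProfile.
End Game.

Section FewQueries.
Variables (R : realType) (n m : nat) (f : R -> R).
Hypotheses (m_gt0 : (0 < m)%N) (m_le_n : (m <= n)%N).

Let one : 'I_m -> R := fun=> 1.
Let g : 'I_n -> 'I_m := mod_ord m_gt0.
Let own i j := g i == j.
Let team j := [set i | own i j].
Let P := owner_profile one own.

Let team_gt0 j : (0 < #|team j|)%N.
Proof. by rewrite card_mod_ord_fibre ltn_addr // divn_gt0. Qed.

Let team_le_succ j j' : (#|team j| <= #|team j'|.+1)%N.
Proof. by rewrite !card_mod_ord_fibre; case: (_ < _)%N; case: (_ < _)%N; lia. Qed.

Let utility_P i : utility f one P i = #|team (g i)|%:R^-1.
Proof.
by rewrite utility_owner_profile // (big_pred1 (g i)) // => j; rewrite /own eq_sym.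
Qed.

Lemma unit_thresholds_no_profitable_deviation i d :
  in_D d -> utility f one (deviate P i d) i <= utility f one P i.
Proof.
move=> [d01 sum_d]; set Q := deviate P i d; rewrite utility_P.
have d_ge0 j : 0 <= d j by case/andP: (d01 j).
pose E := [set j | one j <= Q i j].
have card_E : (#|E| <= 1)%N.
  rewrite -(lern1 R) -[leLHS]mulr1 (le_trans _ sum_d) //.
  by apply: card_mulr_le_sum => // j; rewrite inE /Q deviate_self.
have share_le j : winner f one Q i j ->
    (nb_winners f one Q j)%:R^-1 <= #|team (g i)|%:R^-1 :> R.
  move=> win; have dj : d j = 1.
    apply/le_anti; rewrite (andP (d01 j)).2.
    by rewrite -(deviate_self P i d) (winner_eligible win).
  apply: le_trans (share_le_inv_card (S := i |: team j) _ _) _.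
  - by apply/card_gt0P; exists i; rewrite !inE eqxx.
  - move=> k; rewrite !inE => /orP [/eqP -> //| own_k]; apply: winner_tie win _.
    have [-> //|k_neq_i] := eqVneq k i.
    by rewrite /Q deviate_other // deviate_self /P /owner_profile own_k dj.
  rewrite lef_pV2 ?posrE ?ltr0n ?ler_nat ?cardsU1 ?ltn_addl ?team_gt0 //.
  have [<-|g_neq] := eqVneq (g i) j; first by rewrite leq_addl.
  by rewrite inE /own g_neq add1n team_le_succ.
pose b : 'I_m -> R := fun=> #|team (g i)|%:R^-1.
apply: le_trans (utility_le_sum_eligible (b := b) _ share_le) _ => [j|].
  by rewrite invr_ge0.
by rewrite sumr_const -[leRHS]mulr1n ler_wpMn2l ?invr_ge0.
Qed.

Lemma unit_thresholds_equilibrium : pure_equilibrium f one P.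
Proof.
split; [|split].
- move=> i; apply: owner_profile_in_D => [//|j|]; first exact: lexx.
  by rewrite (big_pred1 (g i)) // => j; rewrite /own eq_sym.
- move=> i d; exact: unit_thresholds_no_profitable_deviation.
- by move=> j; rewrite nb_winners_owner_profile //; apply: team_gt0.
Qed.

End FewQueries.

Section ManyQueries.
Variables (R : realType) (n m : nat) (f : R -> R).
Hypotheses (n_gt0 : (0 < n)%N) (n_le_m : (n <= m)%N).

Let o : 'I_m -> 'I_n := mod_ord n_gt0.
Let own i j := o j == i.
Let load i := #|[set j | own i j]|.
Let q := (m %/ n)%N.

Definition balanced_threshold (j : 'I_m) : R := (load (o j))%:R^-1.
Local Notation t := balanced_threshold.
Let P := owner_profile t own.

Let q_gt0 : (0 < q)%N. Proof. by rewrite divn_gt0. Qed.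

Let load_bounds i : (q <= load i <= q.+1)%N.
Proof.
by rewrite /load card_mod_ord_fibre; case: (_ < _)%N; rewrite ?addn0 ?addn1 leqnn leqnSn.
Qed.

Let load_gt0 i : (0 < load i)%N.
Proof. by rewrite (leq_trans q_gt0) //; case/andP: (load_bounds i). Qed.

Lemma balanced_threshold_gt0 j : 0 < t j.
Proof. by rewrite invr_gt0 ltr0n load_gt0. Qed.

Lemma balanced_threshold_le1 j : t j <= 1.
Proof. by rewrite invf_le1 ?ltr0n ?ler1n ?load_gt0. Qed.

Let t_ge j : q.+1%:R^-1 <= t j.
Proof.
by rewrite lef_pV2 ?posrE ?ltr0n ?load_gt0 // ler_nat; case/andP: (load_bounds (o j)).
Qed.

Let sum_owned_t i : \sum_(j | own i j) t j = 1.
Proof.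
rewrite (eq_bigr (fun=> (load i)%:R^-1)) => [|j /eqP <-] //.
rewrite -big_set sumr_const -[_ *+ #|_|]mulr_natr mulVf //.
by rewrite pnatr_eq0 -lt0n load_gt0.
Qed.

Lemma sum_balanced_threshold : \sum_j t j = n%:R.
Proof.
rewrite (partition_big o xpredT) //=.
by rewrite (eq_bigr (fun=> 1)) => [|i _]; rewrite ?sumr_const ?card_ord ?sum_owned_t.
Qed.

Let utility_P i : utility f t P i = (load i)%:R.
Proof.
rewrite (utility_owner_profile _ _ balanced_threshold_gt0) (eq_bigr (fun=> 1)).
  by rewrite -big_set sumr_const.
move=> j _; rewrite (_ : [set k | own k j] = [set o j]) ?cards1 ?invr1 //.
by apply/setP => k; rewrite !inE eq_sym.
Qed.

Section Deviation.
Variables (i : 'I_n) (d : doc R m).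
Hypothesis d_in_D : in_D d.
Let Q := deviate P i d.
Let E := [set j | t j <= d j].
Let c : R := q.+1%:R^-1.

Let d_ge0 j : 0 <= d j. Proof. by case/andP: (d_in_D.1 j). Qed.

Let card_E : (#|E| <= q.+1)%N.
Proof.
rewrite -(ler_nat R) -[leRHS]mul1r -ler_pdivrMr ?ltr0n // (le_trans _ d_in_D.2) //.
by apply: card_mulr_le_sum => // j; rewrite inE => /(le_trans (t_ge j)).
Qed.

Let utility_Q_le_card_E : utility f t Q i <= #|E|%:R.
Proof.
have -> : E = [set j | t j <= Q i j] by rewrite /Q deviate_self.
by rewrite -sumr_const; apply: utility_le_sum_eligible => // j; apply: share_le1.
Qed.

Let tie_on_full_E : #|E| = q.+1 -> load i = q -> forall j,
  winner f t Q i j -> (nb_winners f t Q j)%:R^-1 <= 2^-1 :> R.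
Proof.
move=> E_full load_i j win.
have jE : j \in E by rewrite inE -(deviate_self P i d) (winner_eligible win).
have d_eq_c : d j = c.
  apply: sum_le_card_mulr_eq jE => // [k|].
    by rewrite inE => /(le_trans (t_ge k)).
  by rewrite E_full mulfV ?pnatr_eq0 //; exact: d_in_D.2.
have t_eq_c : t j = c.
  by apply/le_anti/andP; split; [by rewrite -d_eq_c; rewrite inE in jE | exact: t_ge].
have o_neq_i : o j != i.
  apply/eqP => oj; move: t_eq_c; rewrite /balanced_threshold oj load_i.
  by move/invr_inj/eqP; rewrite eqr_nat ltn_eqF.
have S_win k : k \in [set i; o j] -> winner f t Q k j.
  rewrite !inE => /orP [] /eqP -> //; apply: winner_tie win _.
  by rewrite /Q deviate_other // deviate_self /P /owner_profile /own eqxx t_eq_c d_eq_c.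
apply: le_trans (share_le_inv_card _ S_win) _; first by rewrite cards2.
by rewrite cards2 eq_sym o_neq_i.
Qed.

Lemma balanced_threshold_no_profitable_deviation :
  utility f t Q i <= utility f t P i.
Proof.
rewrite utility_P.
have [load_i|load_i] : load i = q.+1 \/ load i = q by case/andP: (load_bounds i); lia.
  by apply: le_trans utility_Q_le_card_E _; rewrite ler_nat load_i.
have [E_le|E_gt] := leqP #|E| q.
  by apply: le_trans utility_Q_le_card_E _; rewrite ler_nat load_i.
have E_full : #|E| = q.+1 by apply/eqP; rewrite eqn_leq card_E E_gt.
have tie := tie_on_full_E E_full load_i.
apply: le_trans (utility_le_sum_eligible (b := fun=> 2^-1) _ tie) _ => [j|].
  by rewrite invr_ge0 ler0n.
have -> : [set j | t j <= Q i j] = E by rewrite /Q deviate_self.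
have q_ge1 : 1 <= q%:R :> R by rewrite ler1n.
rewrite sumr_const E_full -[_ *+ q.+1]mulr_natl -natr1 load_i; lra.
Qed.

End Deviation.

Lemma balanced_threshold_equilibrium : pure_equilibrium f t P.
Proof.
have t_gt0 := balanced_threshold_gt0.
split; [|split].
- move=> i; apply: owner_profile_in_D => //; first exact: balanced_threshold_le1.
  by rewrite sum_owned_t.
- move=> i d; exact: balanced_threshold_no_profitable_deviation.
- move=> j; rewrite nb_winners_owner_profile //.
  by apply/card_gt0P; exists (o j); rewrite inE /own.
Qed.

End ManyQueries.

Theorem corollary2 (R : realType) (n : nat) (hn : (0 < n)%N) (m : nat)
  (p : R) (hp : 0 < p <= 1) (f : R -> R) (hf : single_peaked f p) :
  exists t : 'I_m -> R,
    (forall j, 0 <= t j <= 1) /\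
    \sum_(j < m) `|t j| <= n%:R /\
    exists P : profile R n m, pure_equilibrium f t P.
Proof.
have [n_le_m|m_lt_n] := leqP n m.
  have t_gt0 := balanced_threshold_gt0 R hn n_le_m.
  exists (balanced_threshold R hn); split; [|split].
  - by move=> j; rewrite ltW ?t_gt0 ?balanced_threshold_le1.
  - by rewrite (eq_bigr _ (fun j _ => gtr0_norm (t_gt0 j))) sum_balanced_threshold.
  - by eexists; apply: balanced_threshold_equilibrium.
case: m m_lt_n => [|m] m_lt_n.
  exists (fun=> 0); split; [by case | split; first by rewrite big_ord0].
  exists (fun _ _ => 0); split; [|split].
  - by move=> i; split; [case | rewrite big_ord0 ler01].
  - by move=> i d _; rewrite /utility !big_ord0.
  - by case.
exists (fun=> 1); split; [|split].
- by move=> j; rewrite ler01 lexx.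
- by rewrite sumr_const normr1 card_ord ler_nat ltnW.
- by eexists; apply: unit_thresholds_equilibrium; rewrite // ltnW.
Qed.
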